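(* In a coherent differential summable resource category $\mathcal L$ (see context), let $f\in\mathcal L_!(X_0\&X_1,Y)$ and $k\in\mathbb N$. Then $D_1(D_0^{k+1}f)$ and $D_0^{k+1}(D_1f)$ both belong to $\mathcal L_!(S^{k+1}X_0\&SX_1,S^{k+2}Y)$ and $$D_1(D_0^{k+1}f)=\lambda(c^{(k)}_Y)\circ_!D_0^{k+1}(D_1f),$$ where $c^{(0)}_Y=c_Y$ and $c^{(l+1)}_Y=c_{S^{l+1}Y}\circ S(c^{(l)}_Y)\in\mathcal L(S^{l+3}Y,S^{l+3}Y)$.
   Context: $\mathcal L$ is a symmetric monoidal closed category with finite products ($X_0\&X_1$, projections $p_0,p_1$, terminal $\top$), with a resource comonad $(!,\mathrm{der},\mathrm{dig})$ and Seely isomorphisms $m^0\in\mathcal L(1,!\top)$, $m^2_{X_0,X_1}\in\mathcal L(!X_0\otimes!X_1,!(X_0\&X_1))$ (a model of linear logic). Kleisli category $\mathcal L_!$: $\mathcal L_!(X,Y)=\mathcal L(!X,Y)$, $g\circ_!f=g\circ!f\circ\mathrm{dig}_X$; for $h\in\mathcal L(X,Y)$, $\lambda(h)=h\circ\mathrm{der}_X$. $\mathcal L$ has zero morphisms and a summability structure $(S,\pi_0,\pi_1,\sigma)$ ($\pi_0,\pi_1,\sigma:S\Rightarrow\mathrm{Id}$, $\pi_0,\pi_1$ jointly monic; $f_0+f_1=\sigma\langle f_0,f_1\rangle$ when the unique $\langle f_0,f_1\rangle$ with $\pi_i\langle f_0,f_1\rangle=f_i$ exists), satisfying the axioms of Ehrhard's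 coherent differentiation (homsets partial commutative monoids, composition and $\otimes$ distributing over sums); $\iota_0=\langle\mathrm{id},0\rangle$; the flip $c:S^2\Rightarrow S^2$ with $\pi_i\pi_jc=\pi_j\pi_i$; $\tau:S^2\Rightarrow S$ with $\pi_0\tau=\pi_0\pi_0$, $\pi_1\tau=\pi_1\pi_0+\pi_0\pi_1$; $S$ preserves products strictly; $L_{X_0,X_1}:SX_0\otimes SX_1\to S(X_0\otimes X_1)$ with $\pi_0L=\pi_0\otimes\pi_0$, $\pi_1L=\pi_1\otimes\pi_0+\pi_0\otimes\pi_1$. A natural $\partial_X\in\mathcal L(!SX,S!X)$ satisfies: $\pi_0\partial_X=!\pi_0$; $\partial_X\circ!\iota_0=\iota_0$, $\tau\circ S\partial_X\circ\partial_{SX}=\partial_X\circ!\tau$; $S\mathrm{der}_X\circ\partial_X=\mathrm{der}_{SX}$, $S\mathrm{dig}_X\circ\partial_X=\partial_{!X}\circ!\partial_X\circ\mathrm{dig}_{SX}$; $S(m^0)^{-1}\partial_\top=\iota_0(m^0)^{-1}!0$, $S(m^2)^{-1}\partial_{X_0\&X_1}=L_{!X_0,!X_1}(\partial_{X_0}\otimes\partial_{X_1})(m^2_{SX_0,SX_1})^{-1}$; $c\circ S\partial_X\circ\partial_{SX}=S\partial_X\circ\partial_{SX}\circ!c$. Derived: $D$ on $\mathcal L_!$ with $DX=SX$, $Df=Sf\circ\partial_X$; $\psi^0_{X_0,X_1}=\lambda(SX_0\&\iota_0)$, $\psi^1_{X_0,X_1}=\lambda(\iota_0\&SX_1)$;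 $D_0f=Df\circ_!\psi^0$, $D_1f=Df\circ_!\psi^1$, and $D_0^{k}$ denotes $k$-fold iteration of $D_0$. *)

Record Cat := {
  Ob : Type;
  Hom : Ob -> Ob -> Type;
  idm : forall X, Hom X X;
  comp : forall {X Y Z}, Hom Y Z -> Hom X Y -> Hom X Z;
  comp_idl : forall X Y (f : Hom X Y), comp (idm Y) f = f;
  comp_idr : forall X Y (f : Hom X Y), comp f (idm X) = f;
  comp_assoc : forall X Y Z W (f : Hom X Y) (g : Hom Y Z) (h : Hom Z W),
      comp h (comp g f) = comp (comp h g) f }.
Arguments idm {c} X.
Arguments comp {c X Y Z} _ _.
Notation "g ∘ f" := (comp g f) (at level 40, left associativity).

Record SMCC (C : Cat) := {
  tens : Ob C -> Ob C -> Ob C;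
  tensm : forall {X X' Y Y'}, Hom C X X' -> Hom C Y Y' -> Hom C (tens X Y) (tens X' Y');
  tensm_id : forall X Y, tensm (idm X) (idm Y) = idm (tens X Y);
  tensm_comp : forall X X' X'' Y Y' Y'' (f : Hom C X X') (g : Hom C X' X'')
      (f' : Hom C Y Y') (g' : Hom C Y' Y''),
      tensm (g ∘ f) (g' ∘ f') = tensm g g' ∘ tensm f f';
  one : Ob C;
  alpha : forall X Y Z, Hom C (tens (tens X Y) Z) (tens X (tens Y Z));
  alpha_inv : forall X Y Z, Hom C (tens X (tens Y Z)) (tens (tens X Y) Z);
  alpha_inv_l : forall X Y Z, alpha_inv X Y Z ∘ alpha X Y Z = idm _;
  alpha_inv_r : forall X Y Z, alpha X Y Z ∘ alpha_inv X Y Z = idm _;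
  alpha_nat : forall X X' Y Y' Z Z' (f : Hom C X X') (g : Hom C Y Y') (h : Hom C Z Z'),
      alpha X' Y' Z' ∘ tensm (tensm f g) h = tensm f (tensm g h) ∘ alpha X Y Z;
  lu : forall X, Hom C (tens one X) X;
  lu_inv : forall X, Hom C X (tens one X);
  lu_inv_l : forall X, lu_inv X ∘ lu X = idm _;
  lu_inv_r : forall X, lu X ∘ lu_inv X = idm _;
  lu_nat : forall X X' (f : Hom C X X'), lu X' ∘ tensm (idm one) f = f ∘ lu X;
  ru : forall X, Hom C (tens X one) X;
  ru_inv : forall X, Hom C X (tens X one);
  ru_inv_l : forall X, ru_inv X ∘ ru X = idm _;
  ru_inv_r : forall X, ru X ∘ ru_inv X = idm _;
  ru_nat : forall X X' (f : Hom C X X'), ru X' ∘ tensm f (idm one) = f ∘ ru X;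
  gam : forall X Y, Hom C (tens X Y) (tens Y X);
  gam_inv : forall X Y, gam Y X ∘ gam X Y = idm _;
  gam_nat : forall X X' Y Y' (f : Hom C X X') (g : Hom C Y Y'),
      gam X' Y' ∘ tensm f g = tensm g f ∘ gam X Y;
  pentagon : forall W X Y Z,
      alpha W X (tens Y Z) ∘ alpha (tens W X) Y Z
      = tensm (idm W) (alpha X Y Z) ∘ alpha W (tens X Y) Z ∘ tensm (alpha W X Y) (idm Z);
  triangle : forall X Y,
      tensm (idm X) (lu Y) ∘ alpha X one Y = tensm (ru X) (idm Y);
  hexagon : forall X Y Z,
      alpha Y Z X ∘ gam X (tens Y Z) ∘ alpha X Y Z
      = tensm (idm Y) (gam X Z) ∘ alpha Y X Z ∘ tensm (gam X Y) (idm Z);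
  lin : Ob C -> Ob C -> Ob C;
  ev : forall X Y, Hom C (tens (lin X Y) X) Y;
  cur : forall {Z X Y}, Hom C (tens Z X) Y -> Hom C Z (lin X Y);
  ev_cur : forall Z X Y (f : Hom C (tens Z X) Y), ev X Y ∘ tensm (cur f) (idm X) = f;
  cur_unique : forall Z X Y (f : Hom C (tens Z X) Y) (g : Hom C Z (lin X Y)),
      ev X Y ∘ tensm g (idm X) = f -> g = cur f }.
Arguments tens {C} _ _ _.
Arguments tensm {C} _ {X X' Y Y'} _ _.
Arguments one {C} _.
Arguments alpha {C} _ _ _ _.
Arguments lu {C} _ _.
Arguments ru {C} _ _.
Arguments gam {C} _ _ _.

Record Cart (C : Cat) := {
  withh : Ob C -> Ob C -> Ob C;
  p0 : forall X0 X1, Hom C (withh X0 X1) X0;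
  p1 : forall X0 X1, Hom C (withh X0 X1) X1;
  pair : forall {Z X0 X1}, Hom C Z X0 -> Hom C Z X1 -> Hom C Z (withh X0 X1);
  pair_p0 : forall Z X0 X1 (f0 : Hom C Z X0) (f1 : Hom C Z X1), p0 X0 X1 ∘ pair f0 f1 = f0;
  pair_p1 : forall Z X0 X1 (f0 : Hom C Z X0) (f1 : Hom C Z X1), p1 X0 X1 ∘ pair f0 f1 = f1;
  pair_unique : forall Z X0 X1 (f0 : Hom C Z X0) (f1 : Hom C Z X1) (h : Hom C Z (withh X0 X1)),
      p0 X0 X1 ∘ h = f0 -> p1 X0 X1 ∘ h = f1 -> h = pair f0 f1;
  top : Ob C;
  to_top : forall Z, Hom C Z top;
  top_unique : forall Z (h : Hom C Z top), h = to_top Z }.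
Arguments withh {C} _ _ _.
Arguments p0 {C} _ _ _.
Arguments p1 {C} _ _ _.
Arguments pair {C} _ {Z X0 X1} _ _.
Arguments top {C} _.

Definition withm {C : Cat} (P : Cart C) {X0 X1 Y0 Y1}
  (f0 : Hom C X0 Y0) (f1 : Hom C X1 Y1) : Hom C (withh P X0 X1) (withh P Y0 Y1) :=
  pair P (f0 ∘ p0 P X0 X1) (f1 ∘ p1 P X0 X1).

Record LLModel (C : Cat) (M : SMCC C) (P : Cart C) := {
  bang : Ob C -> Ob C;
  bangm : forall {X Y}, Hom C X Y -> Hom C (bang X) (bang Y);
  bangm_id : forall X, bangm (idm X) = idm (bang X);
  bangm_comp : forall X Y Z (f : Hom C X Y) (g : Hom C Y Z), bangm (g ∘ f) = bangm g ∘ bangm f;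
  der : forall X, Hom C (bang X) X;
  dig : forall X, Hom C (bang X) (bang (bang X));
  der_nat : forall X Y (f : Hom C X Y), der Y ∘ bangm f = f ∘ der X;
  dig_nat : forall X Y (f : Hom C X Y), dig Y ∘ bangm f = bangm (bangm f) ∘ dig X;
  comonad_1 : forall X, der (bang X) ∘ dig X = idm (bang X);
  comonad_2 : forall X, bangm (der X) ∘ dig X = idm (bang X);
  comonad_3 : forall X, dig (bang X) ∘ dig X = bangm (dig X) ∘ dig X;
  m0 : Hom C (one M) (bang (top P));
  m0_inv : Hom C (bang (top P)) (one M);
  m0_inv_l : m0_inv ∘ m0 = idm _;
  m0_inv_r : m0 ∘ m0_inv = idm _;
  m2 : forall X0 X1, Hom C (tens M (bang X0) (bang X1)) (bang (withh P X0 X1));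
  m2_inv : forall X0 X1, Hom C (bang (withh P X0 X1)) (tens M (bang X0) (bang X1));
  m2_inv_l : forall X0 X1, m2_inv X0 X1 ∘ m2 X0 X1 = idm _;
  m2_inv_r : forall X0 X1, m2 X0 X1 ∘ m2_inv X0 X1 = idm _;
  m2_nat : forall X0 X1 Y0 Y1 (f0 : Hom C X0 Y0) (f1 : Hom C X1 Y1),
      m2 Y0 Y1 ∘ tensm M (bangm f0) (bangm f1) = bangm (withm P f0 f1) ∘ m2 X0 X1;
  (* (!, m0, m2) is a symmetric monoidal functor (L,&,T) -> (L,⊗,1) *)
  m2_assoc : forall X Y Z,
      m2 X (withh P Y Z) ∘ tensm M (idm (bang X)) (m2 Y Z) ∘ alpha M (bang X) (bang Y) (bang Z)
      = bangm (pair P (p0 P X Y ∘ p0 P (withh P X Y) Z)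
                      (pair P (p1 P X Y ∘ p0 P (withh P X Y) Z) (p1 P (withh P X Y) Z)))
        ∘ m2 (withh P X Y) Z ∘ tensm M (m2 X Y) (idm (bang Z));
  m2_lunit : forall X,
      bangm (p1 P (top P) X) ∘ m2 (top P) X ∘ tensm M m0 (idm (bang X)) = lu M (bang X);
  m2_runit : forall X,
      bangm (p0 P X (top P)) ∘ m2 X (top P) ∘ tensm M (idm (bang X)) m0 = ru M (bang X);
  m2_sym : forall X Y,
      bangm (pair P (p1 P X Y) (p0 P X Y)) ∘ m2 X Y = m2 Y X ∘ gam M (bang X) (bang Y);
  m2_dig : forall X Y,
      bangm (pair P (bangm (p0 P X Y)) (bangm (p1 P X Y))) ∘ dig (withh P X Y) ∘ m2 X Y
      = m2 (bang X) (bang Y) ∘ tensm M (dig X) (dig Y) }.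
Arguments bang {C M P} _ _.
Arguments bangm {C M P} _ {X Y} _.
Arguments der {C M P} _ _.
Arguments dig {C M P} _ _.
Arguments m0_inv {C M P} _.
Arguments m2 {C M P} _ _ _.
Arguments m2_inv {C M P} _ _ _.

Record PreSumm (C : Cat) (M : SMCC C) := {
  zero : forall X Y, Hom C X Y;
  zero_comp_l : forall X Y Z (f : Hom C X Y), zero Y Z ∘ f = zero X Z;
  zero_comp_r : forall X Y Z (g : Hom C Y Z), g ∘ zero X Y = zero X Z;
  zero_tens_l : forall X X' Y Y' (g : Hom C Y Y'),
      tensm M (zero X X') g = zero (tens M X Y) (tens M X' Y');
  zero_tens_r : forall X X' Y Y' (f : Hom C X X'),
      tensm M f (zero Y Y') = zero (tens M X Y) (tens M X' Y');
  Sob : Ob C -> Ob C;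
  Sm : forall {X Y}, Hom C X Y -> Hom C (Sob X) (Sob Y);
  Sm_id : forall X, Sm (idm X) = idm (Sob X);
  Sm_comp : forall X Y Z (f : Hom C X Y) (g : Hom C Y Z), Sm (g ∘ f) = Sm g ∘ Sm f;
  pi0 : forall X, Hom C (Sob X) X;
  pi1 : forall X, Hom C (Sob X) X;
  sig : forall X, Hom C (Sob X) X;
  pi0_nat : forall X Y (f : Hom C X Y), pi0 Y ∘ Sm f = f ∘ pi0 X;
  pi1_nat : forall X Y (f : Hom C X Y), pi1 Y ∘ Sm f = f ∘ pi1 X;
  sig_nat : forall X Y (f : Hom C X Y), sig Y ∘ Sm f = f ∘ sig X;
  pi_jmono : forall Z X (g h : Hom C Z (Sob X)),
      pi0 X ∘ g = pi0 X ∘ h -> pi1 X ∘ g = pi1 X ∘ h -> g = h }.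
Arguments zero {C M} _ _ _.
Arguments Sob {C M} _ _.
Arguments Sm {C M} _ {X Y} _.
Arguments pi0 {C M} _ _.
Arguments pi1 {C M} _ _.
Arguments sig {C M} _ _.

(* is_sum f0 f1 g : (f0,f1) is summable (witnessed by <f0,f1>) and f0 + f1 = g *)
Definition is_sum {C : Cat} {M : SMCC C} (Σ : PreSumm C M) {X Y}
  (f0 f1 g : Hom C X Y) : Prop :=
  exists h : Hom C X (Sob Σ Y), pi0 Σ Y ∘ h = f0 /\ pi1 Σ Y ∘ h = f1 /\ sig Σ Y ∘ h = g.

Fixpoint Sn {C : Cat} {M : SMCC C} (Σ : PreSumm C M) (n : nat) (X : Ob C) : Ob C :=
  match n with 0 => X | Datatypes.S n' => Sob Σ (Sn Σ n' X) end.

Record Summ (C : Cat) (M : SMCC C) (P : Cart C) (Σ : PreSumm C M) := {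
  sum_zero_r : forall X Y (f : Hom C X Y), is_sum Σ f (zero Σ X Y) f;
  sum_zero_l : forall X Y (f : Hom C X Y), is_sum Σ (zero Σ X Y) f f;
  sum_comm : forall X Y (f0 f1 g : Hom C X Y), is_sum Σ f0 f1 g -> is_sum Σ f1 f0 g;
  sum_assoc : forall X Y (f0 f1 f2 g01 g : Hom C X Y),
      is_sum Σ f0 f1 g01 -> is_sum Σ g01 f2 g ->
      exists g12, is_sum Σ f1 f2 g12 /\ is_sum Σ f0 g12 g;
  sum_comp_l : forall X Y Z (h : Hom C Y Z) (f0 f1 f : Hom C X Y),
      is_sum Σ f0 f1 f -> is_sum Σ (h ∘ f0) (h ∘ f1) (h ∘ f);
  sum_comp_r : forall X Y Z (h : Hom C X Y) (f0 f1 f : Hom C Y Z),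
      is_sum Σ f0 f1 f -> is_sum Σ (f0 ∘ h) (f1 ∘ h) (f ∘ h);
  sum_tens_l : forall X X' Y Y' (g : Hom C Y Y') (f0 f1 f : Hom C X X'),
      is_sum Σ f0 f1 f -> is_sum Σ (tensm M f0 g) (tensm M f1 g) (tensm M f g);
  sum_tens_r : forall X X' Y Y' (g : Hom C X X') (f0 f1 f : Hom C Y Y'),
      is_sum Σ f0 f1 f -> is_sum Σ (tensm M g f0) (tensm M g f1) (tensm M g f);
  iota0 : forall X, Hom C X (Sob Σ X);
  iota0_pi0 : forall X, pi0 Σ X ∘ iota0 X = idm X;
  iota0_pi1 : forall X, pi1 Σ X ∘ iota0 X = zero Σ X X;
  flip : forall X, Hom C (Sob Σ (Sob Σ X)) (Sob Σ (Sob Σ X));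
  flip_00 : forall X, pi0 Σ X ∘ pi0 Σ (Sob Σ X) ∘ flip X = pi0 Σ X ∘ pi0 Σ (Sob Σ X);
  flip_01 : forall X, pi0 Σ X ∘ pi1 Σ (Sob Σ X) ∘ flip X = pi1 Σ X ∘ pi0 Σ (Sob Σ X);
  flip_10 : forall X, pi1 Σ X ∘ pi0 Σ (Sob Σ X) ∘ flip X = pi0 Σ X ∘ pi1 Σ (Sob Σ X);
  flip_11 : forall X, pi1 Σ X ∘ pi1 Σ (Sob Σ X) ∘ flip X = pi1 Σ X ∘ pi1 Σ (Sob Σ X);
  tau : forall X, Hom C (Sob Σ (Sob Σ X)) (Sob Σ X);
  tau_pi0 : forall X, pi0 Σ X ∘ tau X = pi0 Σ X ∘ pi0 Σ (Sob Σ X);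
  tau_pi1 : forall X, is_sum Σ (pi1 Σ X ∘ pi0 Σ (Sob Σ X)) (pi0 Σ X ∘ pi1 Σ (Sob Σ X))
                                (pi1 Σ X ∘ tau X);
  sprod_inv : forall X0 X1, Hom C (withh P (Sob Σ X0) (Sob Σ X1)) (Sob Σ (withh P X0 X1));
  sprod_inv_l : forall X0 X1,
      sprod_inv X0 X1 ∘ pair P (Sm Σ (p0 P X0 X1)) (Sm Σ (p1 P X0 X1)) = idm _;
  sprod_inv_r : forall X0 X1,
      pair P (Sm Σ (p0 P X0 X1)) (Sm Σ (p1 P X0 X1)) ∘ sprod_inv X0 X1 = idm _;
  Lm : forall X0 X1, Hom C (tens M (Sob Σ X0) (Sob Σ X1)) (Sob Σ (tens M X0 X1));
  Lm_pi0 : forall X0 X1, pi0 Σ (tens M X0 X1) ∘ Lm X0 X1 = tensm M (pi0 Σ X0) (pi0 Σ X1);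
  Lm_pi1 : forall X0 X1,
      is_sum Σ (tensm M (pi1 Σ X0) (pi0 Σ X1)) (tensm M (pi0 Σ X0) (pi1 Σ X1))
               (pi1 Σ (tens M X0 X1) ∘ Lm X0 X1) }.
Arguments iota0 {C M P Σ} _ _.
Arguments flip {C M P Σ} _ _.
Arguments tau {C M P Σ} _ _.
Arguments sprod_inv {C M P Σ} _ _ _.
Arguments Lm {C M P Σ} _ _ _.

Definition sprod {C M P} (Σ : PreSumm C M) X0 X1 :
  Hom C (Sob Σ (withh P X0 X1)) (withh P (Sob Σ X0) (Sob Σ X1)) :=
  pair P (Sm Σ (p0 P X0 X1)) (Sm Σ (p1 P X0 X1)).

Record CDiff (C : Cat) (M : SMCC C) (P : Cart C) (B : LLModel C M P)
             (Σ : PreSumm C M) (SS : Summ C M P Σ) := {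
  dd : forall X, Hom C (bang B (Sob Σ X)) (Sob Σ (bang B X));
  dd_nat : forall X Y (f : Hom C X Y),
      dd Y ∘ bangm B (Sm Σ f) = Sm Σ (bangm B f) ∘ dd X;
  dd_local : forall X, pi0 Σ (bang B X) ∘ dd X = bangm B (pi0 Σ X);
  dd_add_0 : forall X, dd X ∘ bangm B (iota0 SS X) = iota0 SS (bang B X);
  dd_add_tau : forall X,
      tau SS (bang B X) ∘ Sm Σ (dd X) ∘ dd (Sob Σ X) = dd X ∘ bangm B (tau SS X);
  dd_chain_der : forall X, Sm Σ (der B X) ∘ dd X = der B (Sob Σ X);
  dd_chain_dig : forall X,
      Sm Σ (dig B X) ∘ dd X = dd (bang B X) ∘ bangm B (dd X) ∘ dig B (Sob Σ X);
  dd_with_top :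
      Sm Σ (m0_inv B) ∘ dd (top P)
      = iota0 SS (one M) ∘ m0_inv B ∘ bangm B (zero Σ (Sob Σ (top P)) (top P));
  dd_with : forall X0 X1,
      Sm Σ (m2_inv B X0 X1) ∘ dd (withh P X0 X1)
      = Lm SS (bang B X0) (bang B X1) ∘ tensm M (dd X0) (dd X1)
        ∘ m2_inv B (Sob Σ X0) (Sob Σ X1) ∘ bangm B (sprod Σ X0 X1);
  dd_schwarz : forall X,
      flip SS (bang B X) ∘ Sm Σ (dd X) ∘ dd (Sob Σ X)
      = Sm Σ (dd X) ∘ dd (Sob Σ X) ∘ bangm B (flip SS X) }.
Arguments dd {C M P B Σ SS} _ _.

Section Derived.
Context {C : Cat} {M : SMCC C} {P : Cart C} {B : LLModel C M P}
        {Σ : PreSumm C M} {SS : Summ C M P Σ} (DD : CDiff C M P B Σ SS).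

Definition Kl (X Y : Ob C) := Hom C (bang B X) Y.

Definition klcomp {X Y Z} (g : Kl Y Z) (f : Kl X Y) : Kl X Z :=
  g ∘ bangm B f ∘ dig B X.

Definition lam {X Y} (h : Hom C X Y) : Kl X Y := h ∘ der B X.

Definition Dk {X Y} (f : Kl X Y) : Kl (Sob Σ X) (Sob Σ Y) := Sm Σ f ∘ dd DD X.

(* psi^0 = λ(SX0 & ι0), psi^1 = λ(ι0 & SX1), up to S(X0&X1) ≅ SX0&SX1 *)
Definition psi0 X0 X1 : Kl (withh P (Sob Σ X0) X1) (Sob Σ (withh P X0 X1)) :=
  lam (sprod_inv SS X0 X1 ∘ withm P (idm (Sob Σ X0)) (iota0 SS X1)).
Definition psi1 X0 X1 : Kl (withh P X0 (Sob Σ X1)) (Sob Σ (withh P X0 X1)) :=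
  lam (sprod_inv SS X0 X1 ∘ withm P (iota0 SS X0) (idm (Sob Σ X1))).

Definition D0 {X0 X1 Y} (f : Kl (withh P X0 X1) Y) : Kl (withh P (Sob Σ X0) X1) (Sob Σ Y) :=
  klcomp (Dk f) (psi0 X0 X1).
Definition D1 {X0 X1 Y} (f : Kl (withh P X0 X1) Y) : Kl (withh P X0 (Sob Σ X1)) (Sob Σ Y) :=
  klcomp (Dk f) (psi1 X0 X1).

Fixpoint D0n (n : nat) {X0 X1 Y} (f : Kl (withh P X0 X1) Y)
  : Kl (withh P (Sn Σ n X0) X1) (Sn Σ n Y) :=
  match n with
  | O => f
  | Datatypes.S n' => D0 (D0n n' f)
  end.

(* c^(l) : S^(l+2) Y -> S^(l+2) Y, with source typed as S^(l+1)(S Y)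
   (definitionally-different spelling of the same object S^(l+2) Y):
   c^(0) = c_Y,  c^(l+1) = c_{S^(l+1) Y} ∘ S(c^(l)). *)
Fixpoint cpow (l : nat) (Y : Ob C) : Hom C (Sn Σ (Datatypes.S l) (Sob Σ Y)) (Sob Σ (Sn Σ (Datatypes.S l) Y)) :=
  match l with
  | O => flip SS Y
  | Datatypes.S l' => flip SS (Sob Σ (Sn Σ l' Y)) ∘ Sm Σ (cpow l' Y)
  end.

End Derived.
Arguments Kl {C M P} B X Y.
Arguments cpow {C M P Σ} SS l Y.


(* Both partial derivatives are the total derivative [Dk] restricted along a
   linear injection: [D0 g = Dk g ∘! λ inj0] and [D1 g = Dk g ∘! λ inj1].  By
   the chain rule for [Dk], [D1 (D0 g)] and [D0 (D1 g)] are both [Dk (Dk g)]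
   precomposed with a linear map, and these two maps differ exactly by the flip
   [c].  The Schwarz axiom moves [c] past [Dk (Dk g)], which is the case
   [k = 0].  Since [D0] turns post-composition by a linear [h] into
   post-composition by [S h], induction on [k] then builds up [c^(k)]. *)

Section KleisliPartialDerivatives.
Context {C : Cat} {M : SMCC C} {P : Cart C} {B : LLModel C M P}
        {Σ : PreSumm C M} {SS : Summ C M P Σ} (DD : CDiff C M P B Σ SS).

Ltac assoc_right := repeat rewrite <- comp_assoc.
Ltac assoc_left := repeat rewrite comp_assoc.

Lemma klcomp_assoc {X Y Z W} (h : Kl B Z W) (g : Kl B Y Z) (f : Kl B X Y) :
  klcomp h (klcomp g f) = klcomp (klcomp h g) f.
Proof.
  unfold klcomp. rewrite !bangm_comp. assoc_right. f_equal.
  rewrite <- comonad_3, (comp_assoc _ _ _ _ _ (dig B X) (bangm B f) (dig B Y)), dig_nat.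
  assoc_left. reflexivity.
Qed.

Lemma klcomp_lam_l {X Y Z} (h : Hom C Y Z) (f : Kl B X Y) : klcomp (lam h) f = h ∘ f.
Proof.
  unfold klcomp, lam. assoc_right.
  rewrite (comp_assoc _ _ _ _ _ (dig B X) (bangm B f)), der_nat.
  assoc_right. rewrite comonad_1, comp_idr. reflexivity.
Qed.

Lemma klcomp_lam_r {X Y Z} (h : Hom C X Y) (f : Kl B Y Z) : klcomp f (lam h) = f ∘ bangm B h.
Proof.
  unfold klcomp, lam. rewrite bangm_comp. assoc_right.
  rewrite comonad_2, comp_idr. reflexivity.
Qed.

Lemma klcomp_lam {X Y Z} (h : Hom C Y Z) (g : Hom C X Y) :
  klcomp (lam (B:=B) h) (lam g) = lam (h ∘ g).
Proof. rewrite klcomp_lam_l. unfold lam. assoc_left. reflexivity. Qed.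

Lemma Dk_klcomp {X Y Z} (g : Kl B Y Z) (f : Kl B X Y) :
  Dk DD (klcomp g f) = klcomp (Dk DD g) (Dk DD f).
Proof.
  unfold Dk, klcomp. rewrite !Sm_comp, !bangm_comp. assoc_right. f_equal.
  rewrite dd_chain_dig. assoc_left. do 2 f_equal.
  assoc_right. rewrite dd_nat. reflexivity.
Qed.

Lemma Dk_lam {X Y} (h : Hom C X Y) : Dk DD (lam h) = lam (Sm Σ h).
Proof. unfold Dk, lam. rewrite Sm_comp. assoc_right. rewrite dd_chain_der. reflexivity. Qed.

Lemma D0_klcomp_lam {X0 X1 Y Y'} (h : Hom C Y Y') (g : Kl B (withh P X0 X1) Y) :
  D0 DD (klcomp (lam h) g) = klcomp (lam (Sm Σ h)) (D0 DD g).
Proof. unfold D0. rewrite Dk_klcomp, Dk_lam, klcomp_assoc. reflexivity. Qed.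

Lemma with_ext {Z X0 X1} (g h : Hom C Z (withh P X0 X1)) :
  p0 P X0 X1 ∘ g = p0 P X0 X1 ∘ h -> p1 P X0 X1 ∘ g = p1 P X0 X1 ∘ h -> g = h.
Proof.
  intros E0 E1. rewrite (pair_unique C P Z X0 X1 _ _ g eq_refl eq_refl).
  symmetry. apply pair_unique; symmetry; assumption.
Qed.

Lemma p0_withm {X0 X1 Y0 Y1} (u : Hom C X0 Y0) (v : Hom C X1 Y1) :
  p0 P Y0 Y1 ∘ withm P u v = u ∘ p0 P X0 X1.
Proof. apply pair_p0. Qed.

Lemma p1_withm {X0 X1 Y0 Y1} (u : Hom C X0 Y0) (v : Hom C X1 Y1) :
  p1 P Y0 Y1 ∘ withm P u v = v ∘ p1 P X0 X1.
Proof. apply pair_p1. Qed.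

Lemma Sm_p0_sprod_inv {X0 X1} : Sm Σ (p0 P X0 X1) ∘ sprod_inv SS X0 X1 = p0 P _ _.
Proof.
  rewrite <- (pair_p0 _ P _ _ _ (Sm Σ (p0 P X0 X1)) (Sm Σ (p1 P X0 X1))).
  rewrite <- comp_assoc, sprod_inv_r, comp_idr. reflexivity.
Qed.

Lemma Sm_p1_sprod_inv {X0 X1} : Sm Σ (p1 P X0 X1) ∘ sprod_inv SS X0 X1 = p1 P _ _.
Proof.
  rewrite <- (pair_p1 _ P _ _ _ (Sm Σ (p0 P X0 X1)) (Sm Σ (p1 P X0 X1))).
  rewrite <- comp_assoc, sprod_inv_r, comp_idr. reflexivity.
Qed.

Lemma pi0_sprod_inv {X0 X1} :
  pi0 Σ _ ∘ sprod_inv SS X0 X1 = withm P (pi0 Σ X0) (pi0 Σ X1).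
Proof.
  apply with_ext; rewrite ?p0_withm, ?p1_withm, comp_assoc, <- pi0_nat, <- comp_assoc;
    [rewrite Sm_p0_sprod_inv | rewrite Sm_p1_sprod_inv]; reflexivity.
Qed.

Lemma pi1_sprod_inv {X0 X1} :
  pi1 Σ _ ∘ sprod_inv SS X0 X1 = withm P (pi1 Σ X0) (pi1 Σ X1).
Proof.
  apply with_ext; rewrite ?p0_withm, ?p1_withm, comp_assoc, <- pi1_nat, <- comp_assoc;
    [rewrite Sm_p0_sprod_inv | rewrite Sm_p1_sprod_inv]; reflexivity.
Qed.

Lemma pi0_flip {X} : pi0 Σ (Sob Σ X) ∘ flip SS X = Sm Σ (pi0 Σ X).
Proof.
  apply pi_jmono; rewrite comp_assoc; [rewrite flip_00 | rewrite flip_10];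
    [rewrite pi0_nat | rewrite pi1_nat]; reflexivity.
Qed.

Lemma pi1_flip {X} : pi1 Σ (Sob Σ X) ∘ flip SS X = Sm Σ (pi1 Σ X).
Proof.
  apply pi_jmono; rewrite comp_assoc; [rewrite flip_01 | rewrite flip_11];
    [rewrite pi0_nat | rewrite pi1_nat]; reflexivity.
Qed.

Lemma comp_cont {X Y Z W} {a : Hom C Y Z} {b : Hom C X Y} {c : Hom C X Z} :
  a ∘ b = c -> forall r : Hom C W X, a ∘ (b ∘ r) = c ∘ r.
Proof. intros E r. rewrite comp_assoc, E. reflexivity. Qed.

(* Rewrites [a ∘ b] to [c] inside a right-associated composite. *)
Tactic Notation "chain_rewrite" open_constr(E) :=
  first [rewrite E | rewrite (comp_cont E)]; assoc_right.

Ltac simpl_components :=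
  assoc_right;
  repeat first
    [ chain_rewrite pi0_flip | chain_rewrite pi1_flip
    | chain_rewrite (pi0_nat _ _ _ _ _ _) | chain_rewrite (pi1_nat _ _ _ _ _ _)
    | chain_rewrite pi0_sprod_inv | chain_rewrite pi1_sprod_inv
    | chain_rewrite (p0_withm _ _) | chain_rewrite (p1_withm _ _)
    | chain_rewrite (iota0_pi0 _ _ _ _ SS _) | chain_rewrite (iota0_pi1 _ _ _ _ SS _)
    | chain_rewrite (zero_comp_l _ _ _ _ _ _ _) | chain_rewrite (zero_comp_r _ _ _ _ _ _ _)
    | chain_rewrite (comp_idl _ _ _ _) ].

Lemma flip_nat {X Y} (f : Hom C X Y) :
  flip SS Y ∘ Sm Σ (Sm Σ f) = Sm Σ (Sm Σ f) ∘ flip SS X.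
Proof. apply pi_jmono; apply pi_jmono; simpl_components; reflexivity. Qed.

Definition inj0 X0 X1 : Hom C (withh P (Sob Σ X0) X1) (Sob Σ (withh P X0 X1)) :=
  sprod_inv SS X0 X1 ∘ withm P (idm (Sob Σ X0)) (iota0 SS X1).

Definition inj1 X0 X1 : Hom C (withh P X0 (Sob Σ X1)) (Sob Σ (withh P X0 X1)) :=
  sprod_inv SS X0 X1 ∘ withm P (iota0 SS X0) (idm (Sob Σ X1)).

Lemma Sm_inj0_inj1_flip X0 X1 :
  Sm Σ (inj0 X0 X1) ∘ inj1 (Sob Σ X0) X1
  = flip SS (withh P X0 X1) ∘ (Sm Σ (inj1 X0 X1) ∘ inj0 X0 (Sob Σ X1)).
Proof.
  unfold inj0, inj1.
  apply pi_jmono; apply pi_jmono; apply with_ext; simpl_components; reflexivity.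
Qed.

Lemma flip_Dk_Dk {X Y} (g : Kl B X Y) :
  klcomp (lam (flip SS Y)) (Dk DD (Dk DD g)) = klcomp (Dk DD (Dk DD g)) (lam (flip SS X)).
Proof.
  rewrite klcomp_lam_l, klcomp_lam_r. unfold Dk. rewrite Sm_comp. assoc_left.
  rewrite flip_nat. assoc_right. f_equal. assoc_left. apply dd_schwarz.
Qed.

Lemma D1_D0 {X0 X1 Y} (g : Kl B (withh P X0 X1) Y) :
  D1 DD (D0 DD g) = klcomp (lam (flip SS Y)) (D0 DD (D1 DD g)).
Proof.
  unfold D1, D0. rewrite !Dk_klcomp. unfold psi0, psi1. rewrite !Dk_lam.
  rewrite !klcomp_assoc, flip_Dk_Dk, <- !klcomp_assoc, !klcomp_lam.
  do 2 f_equal. exact (Sm_inj0_inj1_flip X0 X1).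
Qed.

End KleisliPartialDerivatives.

Theorem mainTheorem7 (C : Cat) (M : SMCC C) (P : Cart C) (B : LLModel C M P)
  (Σ : PreSumm C M) (SS : Summ C M P Σ) (DD : CDiff C M P B Σ SS)
  (X0 X1 Y : Ob C) (f : Kl B (withh P X0 X1) Y) (k : nat) :
  D1 DD (D0n DD (Datatypes.S k) f)
  = klcomp (lam (cpow SS k Y)) (D0n DD (Datatypes.S k) (D1 DD f)).
Proof.
  induction k as [|k IH].
  - apply D1_D0.
  - change (D0n DD (Datatypes.S (Datatypes.S k)) f) with (D0 DD (D0n DD (Datatypes.S k) f)).
    etransitivity; [apply D1_D0 |].
    rewrite IH, D0_klcomp_lam, klcomp_assoc, klcomp_lam.
    reflexivity.
Qed.
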